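(* Let $G$ be a finite unweighted undirected graph with $n$ nodes, and let $H$ be the spanning subgraph of $G$ with all nodes of $G$ and no edges. Apply $2$-spanner-completion to $H$. Regardless of the choices made (of violating pairs and of shortest paths), the resulting graph $H$ has at most $O(n^{3/2})$ edges.
   Context: For a graph $F$ and nodes $u,v$, $d_F(u,v)$ denotes the length (number of edges) of a shortest path from $u$ to $v$ in $F$ ($\infty$ if none exists). A spanning subgraph $H$ of $G$ is an additive $k$-spanner of $G$ if $d_H(u,v) \le d_G(u,v)+k$ for every pair of nodes $u,v$. The procedure $k$-spanner-completion applied to a spanning subgraph $H$ of $G$ is: as long as there exists a pair of nodes $u,v$ with $d_H(u,v) > d_G(u,v)+k$, pick such a pair, find a shortest path from $u$ to $v$ in $G$, and add all edges of this path to $H$. When it terminates, $H$ is an additive $k$-spanner of $G$. The $O(\cdot)$ bound refers to an absolute constant independent of $G$ and $n$. *)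

From mathcomp Require Import all_boot.
Set Implicit Arguments. Unset Strict Implicit. Unset Printing Implicit Defensive.

Section Graphs.
Variable T : finType.

Definition is_graph (E : {set {set T}}) : Prop := forall e, e \in E -> #|e| = 2.

Definition adj (E : {set {set T}}) : rel T := fun x y => [set x; y] \in E.

(* a walk u = x0, x1, ..., xk = v is encoded by p = [:: x1; ...; xk]; length = size p *)
Definition walk (E : {set {set T}}) (u v : T) (p : seq T) : bool :=
  path (adj E) u p && (last u p == v).

Definition dist_le (E : {set {set T}}) (u v : T) (k : nat) : Prop :=
  exists p, walk E u v p /\ size p <= k.

Definition is_dist (E : {set {set T}}) (u v : T) (d : nat) : Prop :=
  dist_le E u v d /\ forall p, walk E u v p -> d <= size p.

Definition shortest_path (E : {set {set T}}) (u v : T) (p : seq T) : Prop :=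
  walk E u v p /\ is_dist E u v (size p).

(* d_H(u,v) > d_G(u,v) + k  (if d_G = oo the pair is never violating) *)
Definition violating (k : nat) (G H : {set {set T}}) (u v : T) : Prop :=
  exists d, is_dist G u v d /\ ~ dist_le H u v (d + k).

Fixpoint path_edges (x : T) (p : seq T) : seq {set T} :=
  match p with
  | [::] => [::]
  | y :: q => [set x; y] :: path_edges y q
  end.

(* completes k G H H' : some run of k-spanner-completion on G starting from H
   (with some choices of violating pairs and shortest paths) terminates with H'. *)
Inductive completes (k : nat) (G : {set {set T}}) :
    {set {set T}} -> {set {set T}} -> Prop :=
| completes_done H :
    (forall u v, ~ violating k G H u v) -> completes k G H H
| completes_step H u v p H' :
    violating k G H u v -> shortest_path G u v p ->
    completes k G (H :|: [set:: path_edges u p]) H' ->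
    completes k G H H'.

End Graphs.

(* Fix d with n <= d^2 <= 4n + 1 and use the potential
     Phi(H) = d * sum_x min(deg_H x, d) + 3 * #{(a, w, k) : k < 3, d_H(a,w) <= d_G(a,w) + k}.
   When a shortest u-v path x_0 ... x_D of G is added, each new edge with an endpoint of
   degree <= d raises the capped degree sum.  Every other new edge leaves a path node x_i of
   degree > d, and for every neighbour w of x_i one of the pairs (u, w), (v, w) becomes
   k-good for some k < 3 although it was not before (else d_H(u,v) <= D + 2 already held).
   Since the path is shortest, w is adjacent to at most 3 of the x_i, so the 3 * count term
   grows by at least d per such edge.  Hence d * |H| <= Phi(H) <= d^2 n + 9 n^2 = O(n^2),
   i.e. |H| = O(n^{3/2}). *)
From mathcomp Require Import all_boot zify.
From mathcomp Require boolp.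

Set Implicit Arguments. Unset Strict Implicit. Unset Printing Implicit Defensive.

Section Walks.
Variable T : finType.
Implicit Types (E H : {set {set T}}) (u v a b c w : T) (p q : seq T).

Lemma adjC E a b : adj E a b = adj E b a.
Proof. by rewrite /adj setUC. Qed.

Lemma adj_sub E E' a b : E \subset E' -> adj E a b -> adj E' a b.
Proof. by move=> /subsetP sub; rewrite /adj => /sub. Qed.

Lemma walk_sub E E' u v p : E \subset E' -> walk E u v p -> walk E' u v p.
Proof.
move=> sub /andP[Pp Lp]; rewrite /walk Lp andbT.
by apply: sub_path Pp => x y; apply: adj_sub.
Qed.

Lemma walk_cat E a b c p q : walk E a b p -> walk E b c q -> walk E a c (p ++ q).
Proof.
by move=> /andP[Pp /eqP Lp] /andP[Pq Lq]; rewrite /walk cat_path last_cat Lp Pp Pq Lq.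
Qed.

Lemma walk_rev E a b p : walk E a b p -> walk E b a (rev (belast a p)).
Proof.
move=> /andP[Pp /eqP Lp]; rewrite /walk -Lp rev_path; apply/andP; split.
  by apply: sub_path Pp => x y; rewrite /= adjC.
by case: p {Pp Lp} => [|y s] //=; rewrite rev_cons last_rcons.
Qed.

Lemma dist_le_sub E E' a b k : E \subset E' -> dist_le E a b k -> dist_le E' a b k.
Proof. by move=> sub [p [Wp Sp]]; exists p; split=> //; apply: walk_sub Wp. Qed.

Lemma dist_le_leq E a b k k' : k <= k' -> dist_le E a b k -> dist_le E a b k'.
Proof. by move=> kk [p [Wp Sp]]; exists p; split=> //; apply: leq_trans kk. Qed.

Lemma dist_le_cat E a b c k l :
  dist_le E a b k -> dist_le E b c l -> dist_le E a c (k + l).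
Proof.
move=> [p [Wp Sp]] [q [Wq Sq]]; exists (p ++ q).
by rewrite size_cat leq_add // (walk_cat Wp Wq).
Qed.

Lemma dist_leC E a b k : dist_le E a b k -> dist_le E b a k.
Proof.
move=> [p [Wp Sp]]; exists (rev (belast a p)).
by rewrite size_rev size_belast (walk_rev Wp).
Qed.

Lemma dist_le_adj E a b : adj E a b -> dist_le E a b 1.
Proof. by move=> e; exists [:: b]; rewrite /walk /= e eqxx. Qed.

Lemma is_dist_leq E a b d k : is_dist E a b d -> dist_le E a b k -> d <= k.
Proof. by move=> [_ min] [p [Wp Sp]]; apply: leq_trans (min p Wp) Sp. Qed.

Lemma is_dist_uniq E a b d1 d2 : is_dist E a b d1 -> is_dist E a b d2 -> d1 = d2.
Proof.
move=> D1 D2; apply/eqP; rewrite eqn_leq (is_dist_leq D1 D2.1).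
exact: is_dist_leq D2 D1.1.
Qed.

Lemma dist_le_is_dist E a b k :
  dist_le E a b k -> exists2 d, is_dist E a b d & d <= k.
Proof.
elim: k => [|k IH] Dk; first by exists 0.
case: (boolp.pselect (dist_le E a b k)) => [/IH [d Dd dk]|nDk].
  by exists d => //; apply: leq_trans dk _.
exists k.+1 => //; split=> // p Wp; rewrite ltnNge; apply/negP => sp.
by apply: nDk; exists p.
Qed.

(* the i-th node of the walk u :: p, so that node 0 is u and node (size p) its end *)
Definition path_node u p i := last u (take i p).

Lemma size_path_edges u p : size (path_edges u p) = size p.
Proof. by elim: p u => //= y q IH u; rewrite IH. Qed.

Lemma nth_path_edges u p i : i < size p ->
  nth set0 (path_edges u p) i = [set path_node u p i; path_node u p i.+1].
Proof.
rewrite /path_node; elim: p u i => //= y q IH u [|i] /=; first by rewrite take0.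
by move=> ip; rewrite IH.
Qed.

Lemma path_edges_sub E u p : {subset path_edges u p <= E} <-> path (adj E) u p.
Proof.
elim: p u => //= y q IH u; split.
  move=> sub; apply/andP; split; first by apply: sub; rewrite inE eqxx.
  by apply/IH => e He; apply: sub; rewrite inE He orbT.
by case/andP=> e /IH sub f; rewrite inE => /orP[/eqP->|/sub].
Qed.

Lemma walk_take E u v p i : walk E u v p -> walk E u (path_node u p i) (take i p).
Proof.
move=> /andP[Pp _]; rewrite /walk /path_node eqxx andbT.
by move: Pp; rewrite -{1}(cat_take_drop i p) cat_path => /andP[].
Qed.

Lemma walk_drop E u v p i : walk E u v p -> walk E (path_node u p i) v (drop i p).
Proof.
move=> /andP[Pp Lp]; rewrite /walk /path_node.
by move: Pp Lp; rewrite -{1 2}(cat_take_drop i p) cat_path last_cat => /andP[_ ->] ->.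
Qed.

End Walks.

Lemma sum_nat_mem (X : finType) (A : {set X}) : \sum_x (x \in A : nat) = #|A|.
Proof. by rewrite -sum1_card [RHS]big_mkcond; apply: eq_bigr => x _; case: (x \in A). Qed.

Lemma sum_card_le_mul_card_bigcup (I X : finType) (J : {set I}) (N : I -> {set X}) m :
    (forall x, #|[set i in J | x \in N i]| <= m) ->
  \sum_(i in J) #|N i| <= m * #|\bigcup_(i in J) N i|.
Proof.
move=> mult; pose U := \bigcup_(i in J) N i.
have -> : \sum_(i in J) #|N i| = \sum_x #|[set i in J | x \in N i]|.
  rewrite (eq_bigr (fun i => \sum_x (x \in N i : nat))) => [|i _]; last first.
    by rewrite sum_nat_mem.
  rewrite exchange_big /=; apply: eq_bigr => x _.
  by rewrite -sum_nat_mem big_mkcond; apply: eq_bigr => i _; rewrite inE; case: (i \in J).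
rewrite -sum_nat_mem big_distrr /=; apply: leq_sum => x _.
case xU: (x \in U); first by rewrite muln1.
rewrite muln0 leqn0 cards_eq0; apply/eqP/setP => i; rewrite !inE.
by apply/negP => /andP[Ji Ni]; move/negbT/bigcupP: xU; apply; exists i.
Qed.

Lemma card_close_ord D (K : {set 'I_D}) :
  {in K &, forall i j : 'I_D, i <= j -> j <= i + 2} -> #|K| <= 3.
Proof.
move=> close; pose r (i : 'I_D) : 'I_3 := inord (i %% 3).
have inj : {in K &, injective r}.
  move=> i j Ki Kj /(congr1 val); rewrite /= !inordK ?ltn_pmod // => eqm.
  apply/val_inj => /=; case: (leqP i j) => ij.
    by have := close i j Ki Kj ij; lia.
  by have := close j i Kj Ki (ltnW ij); lia.
by rewrite -(card_in_imset inj); apply: leq_trans (max_card _) _; rewrite card_ord.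
Qed.

Section Potential.
Variables (T : finType) (G : {set {set T}}) (dd : nat).
Implicit Types (H : {set {set T}}) (a w : T).

Definition nbhd H a := [set y | adj H a y].
Definition deg H a := #|nbhd H a|.
Definition capped_deg_sum H := \sum_a minn (deg H a) dd.

(* d_H(a,w) <= d_G(a,w) + k; vacuous when a and w are disconnected in G *)
Definition stretch_le H a w k := forall d, is_dist G a w d -> dist_le H a w (d + k).

Definition good_triples H :=
  [set t : T * T * 'I_3 | boolp.asbool (stretch_le H t.1.1 t.1.2 t.2)].

Definition potential H := dd * capped_deg_sum H + 3 * #|good_triples H|.

Lemma nbhd_sub H H' a : H \subset H' -> nbhd H a \subset nbhd H' a.
Proof. by move=> sub; apply/subsetP => y; rewrite !inE; apply: adj_sub. Qed.

Lemma good_triples_sub H H' : H \subset H' -> good_triples H \subset good_triples H'.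
Proof.
move=> sub; apply/subsetP => t; rewrite !inE => /boolp.asboolP g.
by apply/boolp.asboolP => d Dd; apply: dist_le_sub sub (g d Dd).
Qed.

Lemma potential_le H : potential H <= dd * dd * #|T| + 9 * #|T| ^ 2.
Proof.
have cap : capped_deg_sum H <= #|T| * dd.
  by rewrite -sum_nat_const; apply: leq_sum => a _; apply: geq_minr.
have tri : #|good_triples H| <= 3 * #|T| ^ 2.
  by apply: leq_trans (max_card _) _; rewrite !card_prod card_ord; lia.
by rewrite /potential; have := leq_mul (leqnn dd) cap; nia.
Qed.

Section CompletionStep.
Variables (H : {set {set T}}) (u v : T) (p : seq T).
Hypotheses (HG : H \subset G) (viol : violating 2 G H u v) (sp : shortest_path G u v p).

Let H' := H :|: [set:: path_edges u p].
Let D := size p.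
Let x i := path_node u p i.

Let HH' : H \subset H'. Proof. exact: subsetUl. Qed.
Let WG : walk G u v p. Proof. exact: sp.1. Qed.
Let dG : is_dist G u v D. Proof. exact: sp.2. Qed.

Lemma completion_step_sub : H' \subset G.
Proof.
rewrite subUset HG; apply/subsetP => e; rewrite inE.
by apply: (path_edges_sub G u p).2; case/andP: WG.
Qed.

Let WH' : walk H' u v p.
Proof.
case/andP: WG => _ L; rewrite /walk L andbT; apply/path_edges_sub => e He.
by rewrite in_setU inE He orbT.
Qed.

Let prefix_le E i : walk E u v p -> i <= D -> dist_le E u (x i) i.
Proof. by move=> WE iD; exists (take i p); rewrite size_takel // (walk_take _ WE). Qed.

Let suffix_le E i : walk E u v p -> dist_le E (x i) v (D - i).
Proof. by move=> WE; exists (drop i p); rewrite size_drop (walk_drop _ WE). Qed.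

Lemma common_nbr_close i j w :
  i <= j -> j <= D -> adj G (x i) w -> adj G (x j) w -> j <= i + 2.
Proof.
move=> ij jD Ai Aj.
have := dist_le_cat (dist_le_cat (dist_le_cat (prefix_le WG (leq_trans ij jD))
  (dist_le_adj Ai)) (dist_leC (dist_le_adj Aj))) (suffix_le j WG).
by move/(is_dist_leq dG); lia.
Qed.

Lemma nbr_new_good_triple i w : i <= D -> adj H' (x i) w ->
  exists a k, [/\ k < 3, stretch_le H' a w k & ~ stretch_le H a w k].
Proof.
move=> iD A.
have du : dist_le H' u w (i + 1) := dist_le_cat (prefix_le WH' iD) (dist_le_adj A).
have dv : dist_le H' v w (D - i + 1) :=
  dist_le_cat (dist_leC (suffix_le i WH')) (dist_le_adj A).
have [gu Du gu_le] := dist_le_is_dist (dist_le_sub completion_step_sub du).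
have [gv Dv gv_le] := dist_le_is_dist (dist_le_sub completion_step_sub dv).
have Dle : D <= gu + gv := is_dist_leq dG (dist_le_cat Du.1 (dist_leC Dv.1)).
have su : stretch_le H' u w (i + 1 - gu).
  by move=> d Dd; rewrite -(is_dist_uniq Du Dd); apply: dist_le_leq du; lia.
have sv : stretch_le H' v w (D - i + 1 - gv).
  by move=> d Dd; rewrite -(is_dist_uniq Dv Dd); apply: dist_le_leq dv; lia.
case: (boolp.pselect (stretch_le H u w (i + 1 - gu))) => [Hu|]; last first.
  by exists u, (i + 1 - gu); split=> //; lia.
case: (boolp.pselect (stretch_le H v w (D - i + 1 - gv))) => [Hv|]; last first.
  by exists v, (D - i + 1 - gv); split=> //; lia.
case: viol => d [Dd []]; rewrite -(is_dist_uniq dG Dd).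
by apply: dist_le_leq (dist_le_cat (Hu gu Du) (dist_leC (Hv gv Dv))); lia.
Qed.

Let heavy : {set 'I_D} := [set i : 'I_D | dd < deg H' (x i)].
Let heavy_nbhd := \bigcup_(i in heavy) nbhd H' (x i).
Let new_light_arcs : {set T * T} :=
  [set ay | (deg H' ay.1 <= dd) && adj H' ay.1 ay.2 && ~~ adj H ay.1 ay.2].

Lemma heavy_nbhd_good_triples :
  #|heavy_nbhd| + #|good_triples H| <= #|good_triples H'|.
Proof.
have sub : heavy_nbhd \subset [set t.1.2 | t in good_triples H' :\: good_triples H].
  apply/subsetP => w /bigcupP [i _]; rewrite inE => A.
  have [a [k [k3 g' ng]]] := nbr_new_good_triple (ltnW (ltn_ord i)) A.
  apply/imsetP; exists (a, w, inord k) => //.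
  rewrite in_setD !inE /= inordK //.
  by apply/andP; split; [apply/negP => /boolp.asboolP|apply/boolp.asboolP].
have := leq_trans (subset_leq_card sub) (leq_imset_card _ _).
rewrite cardsDS ?good_triples_sub //.
by have := subset_leq_card (good_triples_sub HH'); lia.
Qed.

Lemma heavy_mul_le : #|heavy| * dd <= 3 * #|heavy_nbhd|.
Proof.
apply: leq_trans (sum_card_le_mul_card_bigcup _) => [|w].
  by rewrite -sum_nat_const; apply: leq_sum => i; rewrite inE => /ltnW.
apply: card_close_ord => i j; rewrite !inE => /andP[_ Ai] /andP[_ Aj] ij.
exact: common_nbr_close ij (ltnW (ltn_ord j)) (adj_sub completion_step_sub Ai)
  (adj_sub completion_step_sub Aj).
Qed.

Lemma new_light_arcs_capped_deg :
  #|new_light_arcs| + capped_deg_sum H <= capped_deg_sum H'.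
Proof.
have -> : #|new_light_arcs| = \sum_a \sum_y ((a, y) \in new_light_arcs : nat).
  by rewrite pair_bigA /= -sum_nat_mem; apply: eq_bigr => -[].
rewrite /capped_deg_sum -big_split; apply: leq_sum => a _ /=.
have NN := nbhd_sub a HH'.
case: (leqP (deg H' a) dd) => hd; last first.
  rewrite big1 => [|y _]; last by rewrite inE /= leqNgt hd.
  by have := subset_leq_card NN; rewrite /deg; lia.
have -> : \sum_y ((a, y) \in new_light_arcs : nat) = #|nbhd H' a :\: nbhd H a|.
  rewrite -sum_nat_mem; apply: eq_bigr => y _.
  by rewrite !inE /= hd; case: (adj H' a y); case: (adj H a y).
by rewrite cardsDS //; have := subset_leq_card NN; move: hd; rewrite /deg; lia.
Qed.

(* a new edge x_i x_(i+1) is a light arc from one of its ends unless both ends are heavy *)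
Lemma new_edges_le : #|H' :\: H| <= #|new_light_arcs| + #|heavy|.
Proof.
pose A := [set [set ay.1; ay.2] | ay in new_light_arcs].
pose B := [set nth set0 (path_edges u p) i | i : 'I_D in heavy].
have sub : H' :\: H \subset A :|: B.
  apply/subsetP => e; rewrite !inE => /andP[eH /orP[|ep]]; first by move/negbTE: eH => ->.
  have eH' : e \in H' by rewrite !inE ep orbT.
  have [i ip ei] := nthP set0 ep; rewrite size_path_edges in ip.
  move: ei (ei); rewrite {1}nth_path_edges // => exi ei; subst e.
  case: (leqP (deg H' (x i)) dd) => h1.
    apply/orP; left; apply/imsetP; exists (x i, x i.+1) => //.
    by rewrite inE /= h1 /adj eH' eH.
  case: (leqP (deg H' (x i.+1)) dd) => h2.
    apply/orP; left; apply/imsetP; exists (x i.+1, x i); last by rewrite /= setUC.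
    by rewrite inE /= h2 /adj setUC eH' eH.
  by apply/orP; right; apply/imsetP; exists (Ordinal ip); rewrite ?inE.
apply: leq_trans (subset_leq_card sub) _; apply: leq_trans (leq_card_setU _ _) _.
by apply: leq_add; apply: leq_imset_card.
Qed.

Lemma completion_step_potential : #|H'| * dd + potential H <= #|H| * dd + potential H'.
Proof.
have eH : #|H'| = #|H| + #|H' :\: H|.
  by rewrite cardsDS //; have := subset_leq_card HH'; lia.
have edges := leq_mul (new_edges_le) (leqnn dd).
have capped := leq_mul (leqnn dd) new_light_arcs_capped_deg.
have := heavy_nbhd_good_triples; have := heavy_mul_le.
by rewrite /potential eH; lia.
Qed.

End CompletionStep.

Lemma completes_potential H H' : completes 2 G H H' -> H \subset G ->
  H' \subset G /\ #|H'| * dd + potential H <= #|H| * dd + potential H'.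
Proof.
elim=> {H H'} [H _ sub | H u v p H' vi sp _ IH sub]; first by [].
have [sub' le'] := IH (completion_step_sub sub sp).
by split=> //; have := completion_step_potential sub vi sp; lia.
Qed.

End Potential.

Lemma exists_sqrt_approx n : exists d, [/\ 0 < d, n <= d * d & d * d <= 4 * n + 1].
Proof.
have ex : exists d, (0 < d) && (n <= d * d) by exists n.+1; apply/andP; split => //; nia.
case: (ex_minnP ex) => d /andP[d0 nd] dmin; exists d; split=> //.
case: (leqP d 1) => [d1|d2]; first by nia.
have : ~~ ((0 < d.-1) && (n <= d.-1 * d.-1)) by apply/negP => /dmin; lia.
rewrite negb_and -ltnNge => /orP[|lt]; first by lia.
have h : d <= 2 * d.-1 by lia.
by have := leq_mul h h; nia.
Qed.

Lemma cube_bound_of_mul_bound n d h :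
  0 < d -> n <= d * d -> d * d <= 4 * n + 1 -> h * d <= d * d * n + 9 * n ^ 2 ->
  h ^ 2 <= 196 * n ^ 3.
Proof.
move=> d0 nd dn hd.
have hd14 : h * d <= 14 * (n * n).
  by apply: leq_trans hd _; have := leq_mul dn (leqnn n); nia.
have sq : n * (h * h) <= (14 * (n * n)) * (14 * (n * n)).
  by apply: leq_trans (leq_mul hd14 hd14); have := leq_mul nd (leqnn (h * h)); nia.
case: (posnP n) => [n0|npos].
  move: hd14; rewrite n0 leqn0 muln_eq0 => /orP[/eqP-> //|/eqP d00].
  by rewrite d00 in d0.
by rewrite -(leq_pmul2l npos); nia.
Qed.

Theorem theorem2 :
  exists C : nat, forall (T : finType) (G : {set {set T}}), is_graph G ->
    forall H : {set {set T}}, completes 2 G set0 H ->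
      #|H| ^ 2 <= C * #|T| ^ 3.
Proof.
exists 196 => T G _ H cH.
have [dd [d0 nd dn]] := exists_sqrt_approx #|T|.
have [_ le_pot] := completes_potential dd cH (sub0set G).
rewrite cards0 mul0n add0n in le_pot.
apply: cube_bound_of_mul_bound d0 nd dn _.
exact: leq_trans (leq_trans (leq_addr _ _) le_pot) (potential_le _ _ _).
Qed.
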